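(* Let $D=\{z\in\mathbb C^2:\ |z_2|^2+x_1^2+y_1^4<1\}$ with defining function $\rho$, fix $\zeta\in bD$, and use the local coordinates centered at $\zeta$ described in the context, with $\delta>0$ small enough that $\frac{\partial\Delta}{\partial u_2}(w,z)\ne0$ for $w\in bD$, $|w-\zeta|<\delta$, $|z-\zeta|<\delta$. Suppose $f$ is a $C^1$ function on $bD$ supported in $\{w\in bD:|w-\zeta|<\delta\}$. If $z\in D$ and $|z-\zeta|<\delta$, then $$\mathbf C f(z)=\int_{bD}\frac{1}{\Delta(w,z)}\,\frac{\partial}{\partial u_2}\big(f(w)\gamma(w)\big)\,du_1\,dv_1\,du_2,\qquad \gamma(w)=\frac{\Lambda(u_1,v_1,u_2)}{\frac{\partial\Delta}{\partial u_2}(w,z)}.$$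
   Context: $\rho(w)=|w_2|^2+u_1^2+v_1^4-1$, $\Delta(w,z)=\sum_{j=1}^2\frac{\partial\rho}{\partial w_j}(w)(w_j-z_j)$. The Cauchy-Leray integral is $\mathbf C f(z)=\frac{1}{(2\pi i)^2}\int_{bD}f(w)\,\frac{j^*(\partial\rho\wedge\bar\partial\partial\rho)(w)}{\Delta(w,z)^2}$, $z\in D$, with $j^*$ the pullback by $bD\hookrightarrow\mathbb C^2$; equivalently $\mathbf Cf(z)=\int_{bD}\frac{f(w)\Gamma(w)}{\Delta(w,z)^2}d\sigma(w)$, where $d\sigma$ is induced Lebesgue measure and $\Gamma$ is the smooth positive function with $\Gamma\,d\sigma=(2\pi i)^{-2}j^*(\partial\rho\wedge\bar\partial\partial\rho)$. Local coordinates: $w=(u_1+iv_1,u_2+iv_2)$ obtained by a translation and unitary map so that $\zeta=0$, $\partial\rho/\partial v_2(\zeta)=|\nabla\rho(\zeta)|$ and the other first partials of $\rho$ vanish at $\zeta$; near $\zeta$, $bD$ is the graph $v_2=\Phi(u_1,v_1,u_2)$, and $\Lambda$ is defined by $\Gamma(w)\,d\sigma(w)=\Lambda(u_1,v_1,u_2)\,du_1\,dv_1\,du_2$ there. *)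

From Stdlib Require Import Reals.
From Coquelicot Require Import Coquelicot.
Open Scope R_scope.

Definition C2 : Type := (C * C)%type.

(** Real coordinates of w = (u1 + i v1, u2 + i v2); index 0,1,2,3 <-> u1,v1,u2,v2. *)
Definition rcoord (k : nat) (w : C2) : R :=
  match k with
  | 0%nat => Re (fst w) | 1%nat => Im (fst w)
  | 2%nat => Re (snd w) | _ => Im (snd w) end.

Definition shift (k : nat) (s : R) (w : C2) : C2 :=
  match k with
  | 0%nat => (Cplus (fst w) (RtoC s), snd w)
  | 1%nat => (Cplus (fst w) (Cmult Ci (RtoC s)), snd w)
  | 2%nat => (fst w, Cplus (snd w) (RtoC s))
  | _ => (fst w, Cplus (snd w) (Cmult Ci (RtoC s))) end.

Definition pdR (k : nat) (g : C2 -> R) (w : C2) : R :=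
  Derive (fun s => g (shift k s w)) 0.
Definition pdC (k : nat) (G : C2 -> C) (w : C2) : C :=
  (pdR k (fun x => Re (G x)) w, pdR k (fun x => Im (G x)) w).

(** Wirtinger derivatives d/dw_j and d/d(conj w_j), j = 0,1 standing for the
    paper's indices 1,2. *)
Definition dw (j : nat) (G : C2 -> C) (w : C2) : C :=
  Cmult (RtoC (/2)) (Cminus (pdC (2*j) G w) (Cmult Ci (pdC (2*j+1) G w))).
Definition dwbar (j : nat) (G : C2 -> C) (w : C2) : C :=
  Cmult (RtoC (/2)) (Cplus (pdC (2*j) G w) (Cmult Ci (pdC (2*j+1) G w))).

(** rho(w) = |w2|^2 + u1^2 + v1^4 - 1;  D = {rho < 0},  bD = {rho = 0}. *)
Definition rho (w : C2) : R :=
  (Cmod (snd w)) ^ 2 + (Re (fst w)) ^ 2 + (Im (fst w)) ^ 4 - 1.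
Definition rhoC (w : C2) : C := RtoC (rho w).

Definition rho_d (j : nat) (w : C2) : C := dw j rhoC w.
Definition rho_ddbar (k l : nat) (w : C2) : C := dwbar l (rho_d k) w.

Definition ccoord (j : nat) (w : C2) : C :=
  match j with 0%nat => fst w | _ => snd w end.

Definition sum2 (F : nat -> C) : C := Cplus (F 0%nat) (F 1%nat).

Definition LDelta (w z : C2) : C :=
  sum2 (fun j => Cmult (rho_d j w) (Cminus (ccoord j w) (ccoord j z))).

Definition dist2 (w z : C2) : R :=
  sqrt ((Cmod (Cminus (fst w) (fst z))) ^ 2 + (Cmod (Cminus (snd w) (snd z))) ^ 2).

Definition grad_norm (g : C2 -> R) (w : C2) : R :=
  sqrt ((pdR 0 g w) ^ 2 + (pdR 1 g w) ^ 2 + (pdR 2 g w) ^ 2 + (pdR 3 g w) ^ 2).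

(** 2x2 complex matrices U = ((a,b),(c,d)), unitarity U^* U = I. *)
Definition mat2 : Type := ((C * C) * (C * C))%type.
Definition unitary2 (U : mat2) : Prop :=
  let '((a, b), (c, d)) := U in
  Cplus (Cmult (Cconj a) a) (Cmult (Cconj c) c) = RtoC 1 /\
  Cplus (Cmult (Cconj b) b) (Cmult (Cconj d) d) = RtoC 1 /\
  Cplus (Cmult (Cconj a) b) (Cmult (Cconj c) d) = RtoC 0.

(** Local coordinates w' = U (w - zeta), and the inverse w = zeta + U^* w'. *)
Definition to_loc (zeta : C2) (U : mat2) (w : C2) : C2 :=
  let '((a, b), (c, d)) := U in
  let x := Cminus (fst w) (fst zeta) in let y := Cminus (snd w) (snd zeta) in
  (Cplus (Cmult a x) (Cmult b y), Cplus (Cmult c x) (Cmult d y)).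
Definition from_loc (zeta : C2) (U : mat2) (w' : C2) : C2 :=
  let '((a, b), (c, d)) := U in
  (Cplus (fst zeta) (Cplus (Cmult (Cconj a) (fst w')) (Cmult (Cconj c) (snd w'))),
   Cplus (snd zeta) (Cplus (Cmult (Cconj b) (fst w')) (Cmult (Cconj d) (snd w')))).

Definition C2zero : C2 := (RtoC 0, RtoC 0).

(** Graph parametrization of bD near zeta:
    (u1,v1,u2) |-> the point with local coordinates (u1 + i v1, u2 + i Phi(u1,v1,u2)). *)
Definition psi (zeta : C2) (U : mat2) (Phi : R -> R -> R -> R) (t1 t2 t3 : R) : C2 :=
  from_loc zeta U (Cplus (RtoC t1) (Cmult Ci (RtoC t2)),
                   Cplus (RtoC t3) (Cmult Ci (RtoC (Phi t1 t2 t3)))).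

Definition CD (h : R -> C) (x : R) : C :=
  (Derive (fun s => Re (h s)) x, Derive (fun s => Im (h s)) x).
Definition ex_CD (h : R -> C) (x : R) : Prop :=
  ex_derive (fun s => Re (h s)) x /\ ex_derive (fun s => Im (h s)) x.

(** Partial derivatives d/du1, d/dv1, d/du2 (k = 0,1,2) of functions of (u1,v1,u2). *)
Definition pt (k : nat) (g : R -> R -> R -> C) (t1 t2 t3 : R) : C :=
  match k with
  | 0%nat => CD (fun s => g s t2 t3) t1
  | 1%nat => CD (fun s => g t1 s t3) t2
  | _ => CD (fun s => g t1 t2 s) t3 end.
Definition ex_pt (k : nat) (g : R -> R -> R -> C) (t1 t2 t3 : R) : Prop :=
  match k with
  | 0%nat => ex_CD (fun s => g s t2 t3) t1
  | 1%nat => ex_CD (fun s => g t1 s t3) t2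
  | _ => ex_CD (fun s => g t1 t2 s) t3 end.

Definition C1_on (V : R -> R -> R -> Prop) (g : R -> R -> R -> C) : Prop :=
  forall t1 t2 t3, V t1 t2 t3 -> forall k, (k < 3)%nat ->
    ex_pt k g t1 t2 t3 /\
    continuous (fun p : R * R * R => pt k g (fst (fst p)) (snd (fst p)) (snd p))
               (t1, t2, t3).
Definition C2_on (V : R -> R -> R -> Prop) (g : R -> R -> R -> C) : Prop :=
  C1_on V g /\ forall k, (k < 3)%nat -> C1_on V (pt k g).

Definition det3 (x y z : nat -> C) : C :=
  Cminus (Cplus (Cmult (x 0%nat) (Cminus (Cmult (y 1%nat) (z 2%nat)) (Cmult (y 2%nat) (z 1%nat))))
                (Cmult (x 2%nat) (Cminus (Cmult (y 0%nat) (z 1%nat)) (Cmult (y 1%nat) (z 0%nat)))))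
         (Cmult (x 1%nat) (Cminus (Cmult (y 0%nat) (z 2%nat)) (Cmult (y 2%nat) (z 0%nat)))).

(** Coefficient c of du1 /\ dv1 /\ du2 in the pullback by psi of the 3-form
    d rho /\ dbar d rho
      = sum_{j,k,l} rho_j rho_{k lbar} dw_j /\ d(conj w_l) /\ dw_k. *)
Definition pullback_coef (zeta : C2) (U : mat2) (Phi : R -> R -> R -> R)
  (t1 t2 t3 : R) : C :=
  let ps := psi zeta U Phi in
  let W := fun j a b c => ccoord j (ps a b c) in
  let Wb := fun l a b c => Cconj (ccoord l (ps a b c)) in
  let w := ps t1 t2 t3 in
  sum2 (fun j => sum2 (fun k => sum2 (fun l =>
    Cmult (Cmult (rho_d j w) (rho_ddbar k l w))
      (det3 (fun m => pt m (W j) t1 t2 t3)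
            (fun m => pt m (Wb l) t1 t2 t3)
            (fun m => pt m (W k) t1 t2 t3))))).

(** LambdaL: Gamma dsigma = LambdaL du1 dv1 du2, where
    Gamma dsigma = (2 pi i)^(-2) j^*(d rho /\ dbar d rho) with bD carrying its
    boundary orientation.  The chart (u1,v1,u2) is negatively oriented with
    respect to the boundary orientation (the outward normal is +d/dv2 in local
    coordinates and (v2,u1,v1,u2) is an odd permutation of (u1,v1,u2,v2)),
    hence the minus sign. *)
Definition LambdaL (zeta : C2) (U : mat2) (Phi : R -> R -> R -> R) (t1 t2 t3 : R) : C :=
  let twopii := Cmult (RtoC (2 * PI)) Ci in
  Copp (Cmult (Cinv (Cmult twopii twopii)) (pullback_coef zeta U Phi t1 t2 t3)).

Definition dDelta_u2 (zeta : C2) (U : mat2) (Phi : R -> R -> R -> R)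
  (z : C2) (t1 t2 t3 : R) : C :=
  CD (fun s => LDelta (psi zeta U Phi t1 t2 s) z) t3.

Definition gammaL (zeta : C2) (U : mat2) (Phi : R -> R -> R -> R)
  (z : C2) (t1 t2 t3 : R) : C :=
  Cdiv (LambdaL zeta U Phi t1 t2 t3) (dDelta_u2 zeta U Phi z t1 t2 t3).

Definition chart_dom (zeta : C2) (U : mat2) (Phi : R -> R -> R -> R) (delta : R)
  (t1 t2 t3 : R) : Prop := dist2 (psi zeta U Phi t1 t2 t3) zeta < delta.

Definition restr (zeta : C2) (U : mat2) (Phi : R -> R -> R -> R) (delta : R)
  (g : R -> R -> R -> C) (t1 t2 t3 : R) : C :=
  if Rlt_dec (dist2 (psi zeta U Phi t1 t2 t3) zeta) delta then g t1 t2 t3 else RtoC 0.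

(** Lebesgue integral over R^3 du1 dv1 du2, as iterated (improper) integrals. *)
Definition int3 (g : R -> R -> R -> C) : C :=
  RInt_gen (V := C_R_CompleteNormedModule) (fun t1 =>
    RInt_gen (V := C_R_CompleteNormedModule) (fun t2 =>
      RInt_gen (V := C_R_CompleteNormedModule) (fun t3 => g t1 t2 t3)
        (Rbar_locally m_infty) (Rbar_locally p_infty))
      (Rbar_locally m_infty) (Rbar_locally p_infty))
    (Rbar_locally m_infty) (Rbar_locally p_infty).

(** Cauchy-Leray integral C f(z) = int_{bD} f Gamma / LDelta^2 dsigma, for f
    supported in {w in bD : |w - zeta| < delta}, written in the chart. *)
Definition cauchy_leray_chart (zeta : C2) (U : mat2) (Phi : R -> R -> R -> R)
  (delta : R) (f : C2 -> C) (z : C2) : C :=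
  int3 (restr zeta U Phi delta (fun t1 t2 t3 =>
    let w := psi zeta U Phi t1 t2 t3 in
    Cdiv (Cmult (f w) (LambdaL zeta U Phi t1 t2 t3)) (Cmult (LDelta w z) (LDelta w z)))).

From Stdlib Require Import Reals Lra Lia Rtopology.
From Stdlib Require Import FunctionalExtensionality PropExtensionality ClassicalEpsilon Classical.
From Coquelicot Require Import Coquelicot.
Open Scope R_scope.

(* For fixed (u1, v1) the identity is an integration by parts in u2.  Writing
   Delta' for d Delta / d u2, we have gamma Delta' = Lambda, hence
     f Lambda / Delta^2 = (1 / Delta) d(f gamma)/du2 - d(f gamma / Delta)/du2,
   and the last term integrates to 0 because f gamma / Delta is C^1 with compact
   support in the slice of the chart.  Delta(w, z) <> 0 for w in bD and z in D
   because rho is convex: 2 Re Delta(w, z) >= rho(w) - rho(z) > 0.  That f o psi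
   vanishes near the boundary of each slice is a compactness argument: points of
   bD at distance <= r < delta from zeta stay on the graph of Phi under limits. *)

Notation RInt_line h :=
  (RInt_gen (V := C_R_CompleteNormedModule) h (Rbar_locally m_infty) (Rbar_locally p_infty)).
Notation is_RInt_line h l :=
  (is_RInt_gen (V := C_R_CompleteNormedModule) h (Rbar_locally m_infty) (Rbar_locally p_infty) l).

(** * Complex-valued functions of a real variable *)

(* Coquelicot's generic lemmas, restated with the operations of [R] so that [apply] matches them. *)
Section RealContinuity.

Context {T : UniformSpace} (f g : T -> R) (x : T).
Hypotheses (Hf : continuous f x) (Hg : continuous g x).

Lemma continuous_Rplus : continuous (fun y => f y + g y) x.
Proof. exact (continuous_plus f g x Hf Hg). Qed.

Lemma continuous_Rmult : continuous (fun y => f y * g y) x.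
Proof. exact (continuous_mult f g x Hf Hg). Qed.

Lemma continuous_Ropp : continuous (fun y => - f y) x.
Proof. exact (continuous_opp f x Hf). Qed.

Lemma continuous_Rminus : continuous (fun y => f y - g y) x.
Proof. exact (continuous_minus f g x Hf Hg). Qed.

Lemma continuous_Rpow (n : nat) : continuous (fun y => f y ^ n) x.
Proof.
  induction n as [|n IH]; simpl; [apply continuous_const|].
  exact (continuous_mult f (fun y => f y ^ n) x Hf IH).
Qed.

End RealContinuity.

Ltac continuous_R :=
  repeat match goal with
  | |- continuous (fun _ => Rplus _ _) _ => apply continuous_Rplus
  | |- continuous (fun _ => Rminus _ _) _ => apply continuous_Rminus
  | |- continuous (fun _ => Rmult _ _) _ => apply continuous_Rmult
  | |- continuous (fun _ => Ropp _) _ => apply continuous_Ropp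
  | |- continuous (fun _ => pow _ _) _ => apply continuous_Rpow
  | |- continuous (fun _ => ?c) _ => apply continuous_const
  | |- continuous (fun s => s) _ => apply continuous_id
  | |- continuous fst (_, _) =>
      exact (continuous_fst (U := R_UniformSpace) (V := R_UniformSpace) _ _)
  | |- continuous snd (_, _) =>
      exact (continuous_snd (U := R_UniformSpace) (V := R_UniformSpace) _ _)
  | H : ?G |- ?G => exact H
  end.

Definition is_derive_c (h : R -> C) (x : R) (l : C) : Prop :=
  is_derive (fun s => Re (h s)) x (Re l) /\ is_derive (fun s => Im (h s)) x (Im l).
Definition continuous_c (h : R -> C) (x : R) : Prop :=
  continuous (fun s => Re (h s)) x /\ continuous (fun s => Im (h s)) x.

Lemma C_ext (a b : C) : Re a = Re b -> Im a = Im b -> a = b.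
Proof. apply injective_projections. Qed.

Lemma Cnorm2_neq0 (z : C) : z <> 0%C -> Re z ^ 2 + Im z ^ 2 <> 0.
Proof.
  destruct z as [u v]; unfold Re, Im; simpl; intros Hz E; apply Hz.
  assert (u = 0) by nra; assert (v = 0) by nra; subst; reflexivity.
Qed.

Lemma is_derive_eq (f : R -> R) (x l l' : R) : is_derive f x l -> l = l' -> is_derive f x l'.
Proof. intros ? <-; assumption. Qed.

Section DerivativeC.

Variables (h k : R -> C) (x : R).

Lemma is_derive_c_ext_loc (l : C) :
  locally x (fun s => h s = k s) -> is_derive_c h x l -> is_derive_c k x l.
Proof.
  intros Hloc [H1 H2]; split; eapply is_derive_ext_loc; try eassumption;
    apply (filter_imp _ _ (fun s (e : h s = k s) => f_equal _ e) Hloc).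
Qed.

Lemma is_derive_c_unique (l : C) : is_derive_c h x l -> CD h x = l.
Proof. intros [H1 H2]; apply C_ext; apply is_derive_unique; assumption. Qed.

Lemma is_derive_c_eq (l l' : C) : is_derive_c h x l -> l = l' -> is_derive_c h x l'.
Proof. intros ? <-; assumption. Qed.

Lemma CD_correct : ex_CD h x -> is_derive_c h x (CD h x).
Proof. intros [H1 H2]; split; apply Derive_correct; assumption. Qed.

Lemma is_derive_c_continuous (l : C) : is_derive_c h x l -> continuous_c h x.
Proof.
  intros [H1 H2]; split;
    apply (ex_derive_continuous (K := R_AbsRing) (V := R_NormedModule)); eexists; eassumption.
Qed.

Lemma is_derive_c_plus (l m : C) : is_derive_c h x l -> is_derive_c k x m ->
  is_derive_c (fun s => h s + k s)%C x (l + m)%C.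
Proof. intros [? ?] [? ?]; split; apply (is_derive_plus (V := R_NormedModule)); assumption. Qed.

Lemma is_derive_c_opp (l : C) : is_derive_c h x l -> is_derive_c (fun s => - h s)%C x (- l)%C.
Proof. intros [? ?]; split; apply (is_derive_opp (V := R_NormedModule)); assumption. Qed.

Lemma is_derive_c_minus (l m : C) : is_derive_c h x l -> is_derive_c k x m ->
  is_derive_c (fun s => h s - k s)%C x (l - m)%C.
Proof. intros [? ?] [? ?]; split; apply (is_derive_minus (V := R_NormedModule)); assumption. Qed.

Lemma is_derive_c_mult (l m : C) : is_derive_c h x l -> is_derive_c k x m ->
  is_derive_c (fun s => h s * k s)%C x (l * k x + h x * m)%C.
Proof.
  intros [Hr Hi] [Kr Ki]; split; simpl.
  - eapply is_derive_eq; [apply (is_derive_minus (V := R_NormedModule));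
      apply (is_derive_mult (K := R_AbsRing)); try eassumption; intros; apply Rmult_comm|].
    unfold minus, plus, opp, mult; simpl; unfold Re, Im; ring.
  - eapply is_derive_eq; [apply (is_derive_plus (V := R_NormedModule));
      apply (is_derive_mult (K := R_AbsRing)); try eassumption; intros; apply Rmult_comm|].
    unfold minus, plus, opp, mult; simpl; unfold Re, Im; ring.
Qed.

End DerivativeC.

Lemma is_derive_c_const (c : C) (x : R) : is_derive_c (fun _ => c) x 0%C.
Proof. split; exact (is_derive_const (V := R_NormedModule) _ _). Qed.

Lemma is_derive_c_RtoC (g : R -> R) (x l : R) :
  is_derive g x l -> is_derive_c (fun s => RtoC (g s)) x (RtoC l).
Proof. split; [assumption | exact (is_derive_const (V := R_NormedModule) _ _)]. Qed.

Section DerivativeC1.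

Variables (h : R -> C) (x : R) (l : C).
Hypothesis Hh : is_derive_c h x l.

Lemma is_derive_c_conj : is_derive_c (fun s => Cconj (h s)) x (Cconj l).
Proof. destruct Hh; split; [|apply (is_derive_opp (V := R_NormedModule))]; assumption. Qed.

Lemma is_derive_c_Re : is_derive_c (fun s => RtoC (Re (h s))) x (RtoC (Re l)).
Proof. apply is_derive_c_RtoC, Hh. Qed.

Lemma is_derive_c_Im : is_derive_c (fun s => RtoC (Im (h s))) x (RtoC (Im l)).
Proof. apply is_derive_c_RtoC, Hh. Qed.

Lemma is_derive_c_inv : h x <> 0%C ->
  is_derive_c (fun s => / h s)%C x (- (l / (h x * h x)))%C.
Proof.
  intros Hn; destruct Hh as [H1 H2]; pose proof (Cnorm2_neq0 _ Hn) as Hn2.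
  set (N := fun s => Re (h s) ^ 2 + Im (h s) ^ 2).
  assert (DN : is_derive N x (2 * Re (h x) * Re l + 2 * Im (h x) * Im l)).
  { apply (is_derive_ext (fun s => Re (h s) * Re (h s) + Im (h s) * Im (h s)));
      [intros; unfold N; simpl; ring|].
    eapply is_derive_eq; [apply (is_derive_plus (V := R_NormedModule));
      apply (is_derive_mult (K := R_AbsRing)); try eassumption; intros; apply Rmult_comm|].
    unfold plus, mult; simpl; ring. }
  unfold Cdiv; destruct (h x) as [u v] eqn:E; unfold Re, Im in *; simpl in Hn2 |- *.
  split; simpl.
  - eapply is_derive_eq; [apply (is_derive_div (fun s => fst (h s)) N); try eassumption;
      unfold N; rewrite E; exact Hn2|].
    unfold N; rewrite E; simpl; field; split; [|intro; apply Hn2]; nra.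
  - eapply is_derive_eq; [apply (is_derive_div (fun s => - snd (h s)) N); try eassumption;
      [apply (is_derive_opp (V := R_NormedModule)); exact H2 | unfold N; rewrite E; exact Hn2]|].
    unfold N, opp; rewrite E; simpl; field; split; [|intro; apply Hn2]; nra.
Qed.

End DerivativeC1.

Section ContinuityC.

Variables (h k : R -> C) (x : R).
Hypotheses (Hh : continuous_c h x) (Hk : continuous_c k x).

Lemma continuous_c_plus : continuous_c (fun s => h s + k s)%C x.
Proof. destruct Hh, Hk; split; apply continuous_Rplus; assumption. Qed.

Lemma continuous_c_opp : continuous_c (fun s => - h s)%C x.
Proof. destruct Hh; split; apply continuous_Ropp; assumption. Qed.

Lemma continuous_c_minus : continuous_c (fun s => h s - k s)%C x.
Proof. destruct Hh, Hk; split; apply continuous_Rminus; assumption. Qed.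

Lemma continuous_c_mult : continuous_c (fun s => h s * k s)%C x.
Proof.
  destruct Hh, Hk; split; simpl;
    [apply continuous_Rminus | apply continuous_Rplus]; apply continuous_Rmult; assumption.
Qed.

Lemma continuous_c_conj : continuous_c (fun s => Cconj (h s)) x.
Proof. destruct Hh; split; [|apply continuous_Ropp]; assumption. Qed.

Lemma continuous_c_Re : continuous_c (fun s => RtoC (Re (h s))) x.
Proof. split; [apply Hh | apply continuous_const]. Qed.

Lemma continuous_c_Im : continuous_c (fun s => RtoC (Im (h s))) x.
Proof. split; [apply Hh | apply continuous_const]. Qed.

Lemma continuous_c_inv : h x <> 0%C -> continuous_c (fun s => / h s)%C x.
Proof.
  intros Hn; destruct Hh as [H1 H2]; pose proof (Cnorm2_neq0 _ Hn) as Hn2.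
  assert (HN : continuous (fun s => / (Re (h s) ^ 2 + Im (h s) ^ 2)) x).
  { apply continuous_Rinv_comp; [apply continuous_Rplus; apply continuous_Rpow|]; assumption. }
  split; simpl; apply continuous_Rmult; try assumption; apply continuous_Ropp; assumption.
Qed.

End ContinuityC.

Lemma continuous_c_const (c : C) (x : R) : continuous_c (fun _ => c) x.
Proof. split; apply continuous_const. Qed.

Lemma continuous_c_ext_loc (h k : R -> C) (x : R) :
  locally x (fun s => h s = k s) -> continuous_c h x -> continuous_c k x.
Proof.
  intros Hloc [H1 H2]; split.
  - apply (continuous_ext_loc _ (fun s => Re (h s))); [|exact H1].
    apply (filter_imp _ _ (fun s (e : h s = k s) => f_equal Re e) Hloc).
  - apply (continuous_ext_loc _ (fun s => Im (h s))); [|exact H2].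
    apply (filter_imp _ _ (fun s (e : h s = k s) => f_equal Im e) Hloc).
Qed.

Fixpoint Ck_on (k : nat) (O : R -> Prop) (h : R -> C) : Prop :=
  match k with
  | 0%nat => forall y, O y -> continuous_c h y
  | S k => exists h', (forall y, O y -> is_derive_c h y (h' y)) /\ Ck_on k O h'
  end.

Section CkOn.

Variable O : R -> Prop.

Lemma Ck_on_continuous (n : nat) (h : R -> C) : Ck_on n O h -> forall y, O y -> continuous_c h y.
Proof.
  destruct n as [|n]; simpl; [tauto|].
  intros [h' [Hd _]] y Hy; exact (is_derive_c_continuous _ _ _ (Hd y Hy)).
Qed.

Lemma Ck_on_S (n : nat) (h : R -> C) : Ck_on (S n) O h -> Ck_on n O h.
Proof.
  revert h; induction n as [|n IH]; intros h Hh.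
  - exact (Ck_on_continuous 1 h Hh).
  - destruct Hh as [h' [Hd Hh']]; exists h'; split; [exact Hd | exact (IH h' Hh')].
Qed.

Lemma Ck_on_const (n : nat) (c : C) : Ck_on n O (fun _ => c).
Proof.
  revert c; induction n as [|n IH]; intros c; simpl.
  - intros; apply continuous_c_const.
  - exists (fun _ => 0%C); split; [intros; apply is_derive_c_const | apply IH].
Qed.

Lemma Ck_on_RtoC_id (n : nat) : Ck_on n O (fun s => RtoC s).
Proof.
  destruct n as [|n]; simpl.
  - intros y _; split; [apply continuous_id | apply continuous_const].
  - exists (fun _ => RtoC 1); split; [|apply Ck_on_const].
    intros; apply is_derive_c_RtoC, (is_derive_id (K := R_AbsRing)).
Qed.

Lemma Ck_on_plus (n : nat) (h k : R -> C) :
  Ck_on n O h -> Ck_on n O k -> Ck_on n O (fun s => h s + k s)%C.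
Proof.
  revert h k; induction n as [|n IH]; intros h k Hh Hk; simpl in *.
  - intros; apply continuous_c_plus; auto.
  - destruct Hh as [h' [Hh Hh']], Hk as [k' [Hk Hk']].
    exists (fun y => h' y + k' y)%C; split; [intros; apply is_derive_c_plus; auto | auto].
Qed.

Lemma Ck_on_opp (n : nat) (h : R -> C) : Ck_on n O h -> Ck_on n O (fun s => - h s)%C.
Proof.
  revert h; induction n as [|n IH]; intros h Hh; simpl in *.
  - intros; apply continuous_c_opp; auto.
  - destruct Hh as [h' [Hh Hh']].
    exists (fun y => - h' y)%C; split; [intros; apply is_derive_c_opp; auto | auto].
Qed.

Lemma Ck_on_minus (n : nat) (h k : R -> C) :
  Ck_on n O h -> Ck_on n O k -> Ck_on n O (fun s => h s - k s)%C.
Proof.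
  revert h k; induction n as [|n IH]; intros h k Hh Hk; simpl in *.
  - intros; apply continuous_c_minus; auto.
  - destruct Hh as [h' [Hh Hh']], Hk as [k' [Hk Hk']].
    exists (fun y => h' y - k' y)%C; split; [intros; apply is_derive_c_minus; auto | auto].
Qed.

Lemma Ck_on_conj (n : nat) (h : R -> C) : Ck_on n O h -> Ck_on n O (fun s => Cconj (h s)).
Proof.
  revert h; induction n as [|n IH]; intros h Hh; simpl in *.
  - intros; apply continuous_c_conj; auto.
  - destruct Hh as [h' [Hh Hh']].
    exists (fun y => Cconj (h' y)); split; [intros; apply is_derive_c_conj; auto | auto].
Qed.

Lemma Ck_on_Re (n : nat) (h : R -> C) : Ck_on n O h -> Ck_on n O (fun s => RtoC (Re (h s))).
Proof.
  revert h; induction n as [|n IH]; intros h Hh; simpl in *.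
  - intros; apply continuous_c_Re; auto.
  - destruct Hh as [h' [Hh Hh']].
    exists (fun y => RtoC (Re (h' y))); split; [intros; apply is_derive_c_Re; auto | auto].
Qed.

Lemma Ck_on_Im (n : nat) (h : R -> C) : Ck_on n O h -> Ck_on n O (fun s => RtoC (Im (h s))).
Proof.
  revert h; induction n as [|n IH]; intros h Hh; simpl in *.
  - intros; apply continuous_c_Im; auto.
  - destruct Hh as [h' [Hh Hh']].
    exists (fun y => RtoC (Im (h' y))); split; [intros; apply is_derive_c_Im; auto | auto].
Qed.

Lemma Ck_on_mult (n : nat) (h k : R -> C) :
  Ck_on n O h -> Ck_on n O k -> Ck_on n O (fun s => h s * k s)%C.
Proof.
  revert h k; induction n as [|n IH]; intros h k Hh Hk.
  - intros y Hy; apply continuous_c_mult; auto.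
  - pose proof (Ck_on_S _ _ Hh) as Wh; pose proof (Ck_on_S _ _ Hk) as Wk.
    destruct Hh as [h' [Hh Hh']], Hk as [k' [Hk Hk']].
    exists (fun y => h' y * k y + h y * k' y)%C; split.
    + intros; apply is_derive_c_mult; auto.
    + apply Ck_on_plus; apply IH; assumption.
Qed.

Lemma Ck_on_inv (n : nat) (h : R -> C) :
  (forall y, O y -> h y <> 0%C) -> Ck_on n O h -> Ck_on n O (fun s => / h s)%C.
Proof.
  intros Hn; revert h Hn; induction n as [|n IH]; intros h Hn Hh.
  - intros y Hy; apply continuous_c_inv; auto.
  - pose proof (Ck_on_S _ _ Hh) as Wh; destruct Hh as [h' [Hh Hh']].
    exists (fun y => - (h' y / (h y * h y)))%C; split.
    + intros; apply is_derive_c_inv; auto.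
    + apply Ck_on_opp, Ck_on_mult; [assumption|].
      apply IH; [intros y Hy; apply Cmult_neq_0; auto | apply Ck_on_mult; assumption].
Qed.

Hypothesis O_open : open O.

Lemma Ck_on_ext (n : nat) (h k : R -> C) :
  (forall y, O y -> h y = k y) -> Ck_on n O h -> Ck_on n O k.
Proof.
  intros E; destruct n as [|n]; simpl.
  - intros Hh y Hy; apply (continuous_c_ext_loc h); [apply (filter_imp O) | apply Hh]; auto.
  - intros [h' [Hh Hh']]; exists h'; split; [|exact Hh'].
    intros y Hy; apply (is_derive_c_ext_loc h); [apply (filter_imp O) | apply Hh]; auto.
Qed.

End CkOn.

(* Syntax-directed on purpose: letting [apply] try each lemma on every goal makes
   unification unfold the (transparent) real-number operations, which is very slow. *)
Ltac Ck_on_auto :=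
  repeat match goal with
  | |- Ck_on _ _ (fun _ => Cplus _ _) => apply Ck_on_plus
  | |- Ck_on _ _ (fun _ => Cminus _ _) => apply Ck_on_minus
  | |- Ck_on _ _ (fun _ => Copp _) => apply Ck_on_opp
  | |- Ck_on _ _ (fun _ => Cmult _ _) => apply Ck_on_mult
  | |- Ck_on _ _ (fun _ => Cconj _) => apply Ck_on_conj
  | |- Ck_on _ _ (fun _ => RtoC (Re _)) => apply Ck_on_Re
  | |- Ck_on _ _ (fun _ => RtoC (Im _)) => apply Ck_on_Im
  | |- Ck_on _ _ (fun s => RtoC s) => apply Ck_on_RtoC_id
  | |- Ck_on _ _ RtoC => apply Ck_on_RtoC_id
  | |- Ck_on _ _ (fun _ => ?c) => apply Ck_on_const
  | H : ?G |- ?G => exact H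
  | H : Ck_on (S ?n) ?O ?h |- Ck_on ?n ?O ?h => exact (Ck_on_S _ _ _ H)
  end.

(** * Integration by parts on the real line *)

Lemma is_RInt_line_derive_compact_support (H h : R -> C) (M : R) :
  (forall s, is_derive_c H s (h s)) -> (forall s, continuous_c h s) ->
  (forall s, M < Rabs s -> H s = 0%C) -> is_RInt_line h (RtoC 0).
Proof.
  intros HD HC HS.
  apply (filterlimi_lim_ext_loc (fun _ => RtoC 0)); [|apply filterlim_const].
  apply Filter_prod with (fun x => x < - Rabs M) (fun y => Rabs M < y);
    [exists (- Rabs M); auto | exists (Rabs M); auto |].
  intros x y Hx Hy; simpl in Hx, Hy |- *; pose proof (Rabs_pos M); pose proof (Rle_abs M).
  assert (Hx0 : H x = 0%C) by (apply HS; rewrite Rabs_left; lra).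
  assert (Hy0 : H y = 0%C) by (apply HS; rewrite Rabs_right; lra).
  assert (I1 : is_RInt (fun t => Re (h t)) x y (Re (H y) - Re (H x)))
    by (apply (is_RInt_derive (fun t => Re (H t))); intros t _; [apply HD | apply HC]).
  assert (I2 : is_RInt (fun t => Im (h t)) x y (Im (H y) - Im (H x)))
    by (apply (is_RInt_derive (fun t => Im (H t))); intros t _; [apply HD | apply HC]).
  rewrite Hx0, Hy0, Rminus_0_r in I1, I2.
  exact (is_RInt_fct_extend_pair (U := R_NormedModule) (V := R_NormedModule) h x y 0 0 I1 I2).
Qed.

Lemma RInt_line_eq_of_diff_zero (F G : R -> C) :
  is_RInt_line (fun s => G s - F s)%C (RtoC 0) -> RInt_line F = RInt_line G.
Proof.
  intros HD; unfold RInt_gen; f_equal; apply functional_extensionality; intro l.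
  apply propositional_extensionality; split; intro H.
  - pose proof (is_RInt_gen_plus _ _ _ _ H HD) as P.
    replace (plus l (RtoC 0)) with l in P by exact (eq_sym (plus_zero_r l)).
    apply (is_RInt_gen_ext (fun y => plus (F y) (G y - F y)%C)); [|exact P].
    apply filter_forall; intros; apply C_ext; unfold Re, Im; simpl; ring.
  - pose proof (is_RInt_gen_minus _ _ _ _ H HD) as P.
    replace (minus l (RtoC 0)) with l in P by exact (eq_sym (minus_zero_r l)).
    apply (is_RInt_gen_ext (fun y => minus (G y) (G y - F y)%C)); [|exact P].
    apply filter_forall; intros; apply C_ext; unfold Re, Im; simpl; ring.
Qed.

(* On a slice (t1, t2 fixed), [restr] of the statement is [ext0] for the decision [Rlt_dec]. *)
Definition ext0 {P : R -> Prop} (dec : forall s, {P s} + {~ P s}) (g : R -> C) (s : R) : C :=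
  if dec s then g s else 0%C.

Lemma ext0_in {P : R -> Prop} (dec : forall s, {P s} + {~ P s}) (g : R -> C) (s : R) :
  P s -> ext0 dec g s = g s.
Proof. intros Hs; unfold ext0; destruct (dec s); [reflexivity | contradiction]. Qed.

Lemma ext0_locally_in {P : R -> Prop} (dec : forall s, {P s} + {~ P s}) (g : R -> C) (s : R) :
  open P -> P s -> locally s (fun y => g y = ext0 dec g y).
Proof.
  intros HP Hs; apply (filter_imp P); [|exact (HP s Hs)].
  intros y Hy; symmetry; apply ext0_in, Hy.
Qed.

Section IntegrationByParts.

Variables (P : R -> Prop) (dec : forall s, {P s} + {~ P s}) (phi Lam Del : R -> C) (M : R).
Hypotheses (P_open : open P)
  (phi_C1 : Ck_on 1 P phi) (Lam_C1 : Ck_on 1 P Lam) (Del_C2 : Ck_on 2 P Del)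
  (Del_neq0 : forall s, P s -> Del s <> 0%C) (dDel_neq0 : forall s, P s -> CD Del s <> 0%C)
  (phi_supp : forall s, P s -> M < Rabs s -> phi s = 0%C)
  (phi_edge : forall s, ~ P s -> locally s (fun y => P y -> phi y = 0%C)).

Local Notation q := (fun s => phi s * (Lam s / CD Del s))%C.

Lemma ext0_locally_zero (g : R -> C) (s : R) : (forall y, phi y = 0%C -> g y = 0%C) ->
  ~ P s -> locally s (fun y => ext0 dec g y = 0%C).
Proof.
  intros Hg Hs; apply (filter_imp (fun y => P y -> phi y = 0%C)); [|exact (phi_edge s Hs)].
  intros y Hy; unfold ext0; destruct (dec y) as [Py|]; [apply Hg, Hy, Py | reflexivity].
Qed.

Lemma CD_ext0_locally_zero (s : R) : ~ P s -> locally s (fun y => CD (ext0 dec q) y = 0%C).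
Proof.
  intros Hs.
  assert (Z : locally s (fun y => ext0 dec q y = 0%C))
    by (apply ext0_locally_zero; [intros y Hy; rewrite Hy, Cmult_0_l; reflexivity | exact Hs]).
  apply (filter_imp (fun y => locally y (fun u => ext0 dec q u = 0%C)));
    [intros y Hy | exact (locally_locally _ _ Z)].
  apply is_derive_c_unique, (is_derive_c_ext_loc (fun _ => 0%C)); [|apply is_derive_c_const].
  apply (filter_imp _ _ (fun u (e : ext0 dec q u = 0%C) => eq_sym e) Hy).
Qed.

Local Notation F := (ext0 dec (fun s => phi s * Lam s / (Del s * Del s))%C).
Local Notation G := (ext0 dec (fun s => / Del s * CD (ext0 dec q) s)%C).
Local Notation H := (ext0 dec (fun s => phi s * (Lam s / CD Del s) / Del s)%C).

Lemma by_parts_outside (s : R) :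
  ~ P s -> locally s (fun y => H y = 0%C /\ (G y - F y)%C = 0%C).
Proof.
  intros Hs.
  assert (ZH : locally s (fun y => H y = 0%C))
    by (apply ext0_locally_zero; [intros y Hy; rewrite Hy; unfold Cdiv; ring | exact Hs]).
  assert (ZF : locally s (fun y => F y = 0%C))
    by (apply ext0_locally_zero; [intros y Hy; rewrite Hy; unfold Cdiv; ring | exact Hs]).
  assert (ZG : locally s (fun y => G y = 0%C)).
  { apply (filter_imp (fun y => CD (ext0 dec q) y = 0%C));
      [intros y Hy | exact (CD_ext0_locally_zero s Hs)].
    unfold ext0 at 1; destruct (dec y); [rewrite Hy; ring | reflexivity]. }
  apply (filter_imp (fun y => H y = 0%C /\ F y = 0%C /\ G y = 0%C));
    [intros y [E1 [E2 E3]]; rewrite E1, E2, E3; split; [|ring]; reflexivity|].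
  repeat apply filter_and; assumption.
Qed.

(* Since q * Del' = phi * Lam, the difference of the two integrands is the derivative of H. *)
Lemma by_parts_inside (s : R) :
  P s -> is_derive_c H s (G s - F s)%C /\ continuous_c (fun y => G y - F y)%C s.
Proof.
  intros Hs.
  pose proof (Ck_on_continuous _ 2 _ Del_C2) as Del_C0.
  destruct Del_C2 as [Del' [HDel' Del'_C1]].
  pose proof (Ck_on_continuous _ 1 _ Del'_C1) as Del'_C0.
  assert (EDel' : forall y, P y -> CD Del y = Del' y)
    by (intros y Hy; exact (is_derive_c_unique _ _ _ (HDel' y Hy))).
  assert (q_C1 : Ck_on 1 P q).
  { unfold Cdiv; Ck_on_auto.
    apply Ck_on_inv; [exact dDel_neq0|].
    apply (Ck_on_ext P P_open _ Del'); [intros; symmetry; auto | exact Del'_C1]. }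
  pose proof (Ck_on_continuous _ 1 _ q_C1) as q_C0.
  destruct q_C1 as [q' [Hq' q'_C0]]; simpl in q'_C0.
  set (h := fun y => (q' y / Del y - q y * Del' y / (Del y * Del y))%C).
  assert (Eh : forall y, P y -> (G y - F y)%C = h y).
  { intros y Hy.
    assert (Eq' : CD (ext0 dec q) y = q' y)
      by exact (is_derive_c_unique _ _ _
                  (is_derive_c_ext_loc _ _ _ _ (ext0_locally_in dec q y P_open Hy) (Hq' y Hy))).
    unfold h; rewrite !(ext0_in dec _ y Hy), Eq', (EDel' y Hy); field.
    split; [rewrite <- EDel' by exact Hy|]; auto. }
  split; rewrite ?(Eh s Hs).
  - apply (is_derive_c_ext_loc (fun y => q y / Del y)%C);
      [exact (ext0_locally_in dec _ s P_open Hs)|].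
    unfold Cdiv; eapply is_derive_c_eq;
      [apply is_derive_c_mult; [apply Hq' | apply is_derive_c_inv]; auto|].
    unfold h, Cdiv; ring.
  - apply (continuous_c_ext_loc h).
    { apply (filter_imp P); [intros y Hy; symmetry; apply Eh, Hy | exact (P_open s Hs)]. }
    unfold h, Cdiv; apply continuous_c_minus; apply continuous_c_mult.
    + exact (q'_C0 s Hs).
    + apply continuous_c_inv; auto.
    + apply continuous_c_mult; auto.
    + apply continuous_c_inv; [apply continuous_c_mult; auto | apply Cmult_neq_0; auto].
Qed.

Theorem RInt_line_ext0_by_parts : RInt_line F = RInt_line G.
Proof.
  apply RInt_line_eq_of_diff_zero, (is_RInt_line_derive_compact_support H _ M).
  - intros s; destruct (dec s) as [Hs|Hs]; [exact (proj1 (by_parts_inside s Hs))|].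
    destruct (by_parts_outside s Hs) as [eps Heps].
    rewrite (proj2 (Heps s (ball_center s eps))).
    apply (is_derive_c_ext_loc (fun _ => 0%C)); [|apply is_derive_c_const].
    exists eps; intros y Hy; symmetry; apply (Heps y Hy).
  - intros s; destruct (dec s) as [Hs|Hs]; [exact (proj2 (by_parts_inside s Hs))|].
    apply (continuous_c_ext_loc (fun _ => 0%C)); [|apply continuous_c_const].
    apply (filter_imp _ _ (fun y (Hy : H y = 0%C /\ _) => eq_sym (proj2 Hy)));
      exact (by_parts_outside s Hs).
  - intros s Hs; unfold ext0; destruct (dec s) as [HPs|]; [|reflexivity].
    rewrite (phi_supp s HPs Hs); unfold Cdiv; ring.
Qed.

End IntegrationByParts.

(** * Slices of functions of three variables *)

Lemma continuous_c_slice (F : R * R * R -> C) (t1 t2 y : R) :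
  continuous F (t1, t2, y) -> continuous_c (fun s => F (t1, t2, s)) y.
Proof.
  intros HF.
  assert (Hp : continuous (fun s : R => (t1, t2, s)) y).
  { apply (continuous_comp_2 (fun _ : R => (t1, t2)) (fun s : R => s) (fun a b => (a, b)));
      [apply continuous_const | apply continuous_id |].
    apply (continuous_ext (fun p => p)); [intros [u v]; reflexivity | apply continuous_id]. }
  split.
  - apply (continuous_comp _ (fun p => Re (F p)) _ Hp), (continuous_comp F Re _ HF).
    destruct (F (t1, t2, y)) as [u v].
    exact (continuous_fst (U := R_UniformSpace) (V := R_UniformSpace) u v).
  - apply (continuous_comp _ (fun p => Im (F p)) _ Hp), (continuous_comp F Im _ HF).
    destruct (F (t1, t2, y)) as [u v].
    exact (continuous_snd (U := R_UniformSpace) (V := R_UniformSpace) u v).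
Qed.

Section C1Slices.

Variables (V : R -> R -> R -> Prop) (t1 t2 : R).

Lemma C1_on_slice (g : R -> R -> R -> C) : C1_on V g -> Ck_on 1 (V t1 t2) (g t1 t2).
Proof.
  intros H; exists (pt 2 g t1 t2); split; intros y Hy;
    destruct (H t1 t2 y Hy 2%nat ltac:(lia)) as [Ex Cn].
  - exact (CD_correct _ _ Ex).
  - exact (continuous_c_slice (fun p => pt 2 g (fst (fst p)) (snd (fst p)) (snd p)) _ _ _ Cn).
Qed.

Lemma C2_on_slice (g : R -> R -> R -> C) : C2_on V g -> Ck_on 2 (V t1 t2) (g t1 t2).
Proof.
  intros [H1 H2]; exists (pt 2 g t1 t2); split.
  - intros y Hy; exact (CD_correct _ _ (proj1 (H1 t1 t2 y Hy 2%nat ltac:(lia)))).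
  - exact (C1_on_slice _ (H2 2%nat ltac:(lia))).
Qed.

Lemma C2_on_slice_pt (g : R -> R -> R -> C) (k : nat) :
  C2_on V g -> (k < 3)%nat -> Ck_on 1 (V t1 t2) (pt k g t1 t2).
Proof. intros [_ H2] Hk; exact (C1_on_slice _ (H2 k Hk)). Qed.

End C1Slices.

(** * The defining function *)

Ltac compute_Derive :=
  repeat match goal with
  | |- context [Derive ?f ?x] =>
      erewrite (is_derive_unique f x); [|auto_derive; [exact I | reflexivity]]
  end.

Lemma Cmod2 (z : C) : Cmod z ^ 2 = Re z ^ 2 + Im z ^ 2.
Proof. unfold Cmod; rewrite pow2_sqrt; [reflexivity | nra]. Qed.

Lemma rho_polynomial :
  rho = fun w => Re (snd w) ^ 2 + Im (snd w) ^ 2 + Re (fst w) ^ 2 + Im (fst w) ^ 4 - 1.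
Proof. apply functional_extensionality; intro w; unfold rho; rewrite Cmod2; ring. Qed.

Lemma rho_d_0 : rho_d 0 = fun w => (Re (fst w), -2 * Im (fst w) ^ 3).
Proof.
  apply functional_extensionality; intro w.
  unfold rho_d, dw, pdC, pdR, rhoC; rewrite rho_polynomial; simpl.
  compute_Derive; apply C_ext; unfold Re, Im; simpl; field.
Qed.

Lemma rho_d_1 : rho_d 1 = fun w => Cconj (snd w).
Proof.
  apply functional_extensionality; intro w.
  unfold rho_d, dw, pdC, pdR, rhoC; rewrite rho_polynomial; simpl.
  compute_Derive; apply C_ext; unfold Re, Im; simpl; field.
Qed.

Lemma rho_ddbar_00 : rho_ddbar 0 0 = fun w => RtoC ((1 + 6 * Im (fst w) ^ 2) / 2).
Proof.
  apply functional_extensionality; intro w.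
  unfold rho_ddbar, dwbar, pdC, pdR; rewrite rho_d_0; simpl.
  compute_Derive; apply C_ext; unfold Re, Im; simpl; field.
Qed.

Lemma rho_ddbar_01 : rho_ddbar 0 1 = fun _ => 0%C.
Proof.
  apply functional_extensionality; intro w.
  unfold rho_ddbar, dwbar, pdC, pdR; rewrite rho_d_0; simpl.
  compute_Derive; apply C_ext; unfold Re, Im; simpl; field.
Qed.

Lemma rho_ddbar_10 : rho_ddbar 1 0 = fun _ => 0%C.
Proof.
  apply functional_extensionality; intro w.
  unfold rho_ddbar, dwbar, pdC, pdR; rewrite rho_d_1; simpl.
  compute_Derive; apply C_ext; unfold Re, Im; simpl; field.
Qed.

Lemma rho_ddbar_11 : rho_ddbar 1 1 = fun _ => 1%C.
Proof.
  apply functional_extensionality; intro w.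
  unfold rho_ddbar, dwbar, pdC, pdR; rewrite rho_d_1; simpl.
  compute_Derive; apply C_ext; unfold Re, Im; simpl; field.
Qed.

(* 2 Re LDelta(w, z) = <grad rho(w), w - z>, so this is the convexity of rho. *)
Lemma LDelta_Re_ge_rho_diff (w z : C2) : rho w - rho z <= 2 * Re (LDelta w z).
Proof.
  unfold LDelta, sum2; rewrite rho_d_0, rho_d_1, rho_polynomial.
  destruct w as [[u1 v1] [u2 v2]], z as [[x1 y1] [x2 y2]]; unfold Re, Im; simpl.
  assert (Q : 0 <= (v1 - y1) ^ 2 * (2 * v1 ^ 2 + (v1 + y1) ^ 2))
    by (apply Rmult_le_pos; [apply pow2_ge_0 | nra]).
  pose proof (pow2_ge_0 (u1 - x1)); pose proof (pow2_ge_0 (u2 - x2));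
    pose proof (pow2_ge_0 (v2 - y2)).
  assert (E : 4 * v1 ^ 3 * (v1 - y1) - v1 ^ 4 + y1 ^ 4
              = (v1 - y1) ^ 2 * (2 * v1 ^ 2 + (v1 + y1) ^ 2)) by ring.
  nra.
Qed.

(** * Unitary changes of coordinates *)

Lemma Cmult_reg_r (x y z : C) : z <> 0%C -> (x * z = y * z)%C -> x = y.
Proof.
  intros Hz E; rewrite <- (Cmult_1_r x), <- (Cmult_1_r y), <- (Cinv_r z Hz), !Cmult_assoc, E.
  reflexivity.
Qed.

Section Unitary.

Variables (a b c d : C).
Hypothesis HU : unitary2 ((a, b), (c, d)).

(* U^* U = I makes U^* = adj U / det U, hence also U U^* = I. *)
Lemma unitary2_rows :
  (a * Cconj a + b * Cconj b = 1 /\ c * Cconj c + d * Cconj d = 1 /\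
   a * Cconj c + b * Cconj d = 0)%C.
Proof.
  destruct HU as [H1 [H2 H3]].
  assert (H3' : (Cconj b * a + Cconj d * c = 0)%C).
  { apply (f_equal Cconj) in H3; rewrite Cplus_conj, !Cmult_conj, !Cconj_conj in H3.
    replace (Cconj b * a + Cconj d * c)%C with (a * Cconj b + c * Cconj d)%C by ring.
    rewrite H3; apply C_ext; simpl; ring. }
  set (D := (a * d - b * c)%C).
  assert (Ea : (Cconj a * D = d)%C)
    by (transitivity (d * (Cconj a * a + Cconj c * c) - c * (Cconj a * b + Cconj c * d))%C;
        [unfold D; ring | rewrite H1, H3; ring]).
  assert (Eb : (Cconj b * D = - c)%C)
    by (transitivity (d * (Cconj b * a + Cconj d * c) - c * (Cconj b * b + Cconj d * d))%C;
        [unfold D; ring | rewrite H2, H3'; ring]).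
  assert (Ec : (Cconj c * D = - b)%C)
    by (transitivity (a * (Cconj a * b + Cconj c * d) - b * (Cconj a * a + Cconj c * c))%C;
        [unfold D; ring | rewrite H1, H3; ring]).
  assert (Ed : (Cconj d * D = a)%C)
    by (transitivity (a * (Cconj b * b + Cconj d * d) - b * (Cconj b * a + Cconj d * c))%C;
        [unfold D; ring | rewrite H2, H3'; ring]).
  assert (HD : D <> 0%C).
  { intro E; rewrite E, Cmult_0_r in Ea, Eb, Ec, Ed.
    assert (Hc : c = 0%C)
      by (replace c with (- (- c))%C by ring; rewrite <- Eb; apply C_ext; simpl; ring).
    rewrite <- Ed, Hc in H1; apply (f_equal Re) in H1; simpl in H1; lra. }
  repeat split; apply (Cmult_reg_r _ _ D HD).
  - transitivity (a * (Cconj a * D) + b * (Cconj b * D))%C; [ring | rewrite Ea, Eb; unfold D; ring].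
  - transitivity (c * (Cconj c * D) + d * (Cconj d * D))%C; [ring | rewrite Ec, Ed; unfold D; ring].
  - transitivity (a * (Cconj c * D) + b * (Cconj d * D))%C; [ring | rewrite Ec, Ed; ring].
Qed.

Lemma to_loc_from_loc (zeta w : C2) :
  to_loc zeta ((a, b), (c, d)) (from_loc zeta ((a, b), (c, d)) w) = w.
Proof.
  destruct unitary2_rows as [R1 [R2 R3]].
  assert (R4 : (c * Cconj a + d * Cconj b = 0)%C).
  { apply (f_equal Cconj) in R3; rewrite Cplus_conj, !Cmult_conj, !Cconj_conj in R3.
    rewrite (Cmult_comm c), (Cmult_comm d), R3; apply C_ext; simpl; ring. }
  destruct w as [p q]; simpl; f_equal.
  - transitivity ((a * Cconj a + b * Cconj b) * p + (a * Cconj c + b * Cconj d) * q)%C;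
      [ring | rewrite R1, R3; ring].
  - transitivity ((c * Cconj a + d * Cconj b) * p + (c * Cconj c + d * Cconj d) * q)%C;
      [ring | rewrite R2, R4; ring].
Qed.

Lemma dist2_from_loc (zeta w : C2) :
  dist2 (from_loc zeta ((a, b), (c, d)) w) zeta = sqrt (Cmod (fst w) ^ 2 + Cmod (snd w) ^ 2).
Proof.
  destruct unitary2_rows as [R1 [R2 R3]].
  assert (R4 : (Cconj a * c + Cconj b * d = 0)%C).
  { apply (f_equal Cconj) in R3; rewrite Cplus_conj, !Cmult_conj, !Cconj_conj in R3.
    rewrite R3; apply C_ext; simpl; ring. }
  destruct w as [p q]; unfold dist2; f_equal.
  apply (f_equal Re (x := RtoC _) (y := RtoC _)).
  rewrite !RtoC_plus, !Cmod2_conj; simpl fst; simpl snd.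
  rewrite !Cminus_conj, !Cplus_conj, !Cmult_conj, !Cconj_conj.
  transitivity (p * Cconj p * (a * Cconj a + b * Cconj b)
    + q * Cconj q * (c * Cconj c + d * Cconj d)
    + (p * Cconj q * (Cconj a * c + Cconj b * d) + q * Cconj p * (a * Cconj c + b * Cconj d)))%C;
    [ring | rewrite R1, R2, R3, R4; ring].
Qed.

End Unitary.

(** * The graph chart of bD *)

Lemma Re_plus_i (x y : R) : Re (x + Ci * y)%C = x.
Proof. unfold Re; simpl; ring. Qed.

Lemma Im_plus_i (x y : R) : Im (x + Ci * y)%C = y.
Proof. unfold Im; simpl; ring. Qed.

Lemma bounded_sequence_cluster (sn vn : nat -> R) (s r : R) :
  (forall n, Rabs (sn n - s) < / (INR n + 1)) -> (forall n, - r <= vn n <= r) ->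
  exists l, forall (K : R * R -> R) (c : R),
    continuous K (s, l) -> (forall n, K (sn n, vn n) <= c) -> K (s, l) <= c.
Proof.
  intros Hs Hv.
  destruct (Bolzano_Weierstrass vn _ (compact_P3 (- r) r) Hv) as [l Hl].
  exists l; intros K c HK Hc; apply Rnot_lt_le; intro Hlt.
  assert (Hball : locally (K (s, l)) (ball (K (s, l)) (K (s, l) - c)))
    by exact (locally_ball _ (mkposreal _ (proj2 (Rlt_0_minus _ _) Hlt))).
  destruct (HK _ Hball) as [eta Heta].
  destruct (archimed_cor1 eta (cond_pos eta)) as [N [HN HN0]].
  destruct (Hl (disc l eta) N) as [p [HpN Hp]]; [exists eta; intros y Hy; exact Hy|].
  assert (Hsp : Rabs (sn p - s) < eta).
  { apply (Rlt_le_trans _ _ _ (Hs p)), (Rle_trans _ (/ INR N)); [|lra].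
    apply Rinv_le_contravar; [apply lt_0_INR; lia | apply le_INR in HpN; lra]. }
  specialize (Heta (sn p, vn p) (conj Hsp Hp)); specialize (Hc p).
  simpl in Heta; apply Rabs_def2 in Heta; unfold minus, plus, opp in Heta; simpl in Heta; lra.
Qed.

Section Chart.

Variables (zeta : C2) (a b c d : C) (Phi : R -> R -> R -> R) (delta : R).
Local Notation U := ((a, b), (c, d)).
Local Notation PhiC := (fun x y z => RtoC (Phi x y z)).

Lemma Ck_on_ccoord_from_loc (n : nat) (O : R -> Prop) (z0 : C2) (j : nat) (p1 p2 : R -> C) :
  Ck_on n O p1 -> Ck_on n O p2 -> Ck_on n O (fun s => ccoord j (from_loc z0 U (p1 s, p2 s))).
Proof. intros; destruct j; simpl; Ck_on_auto. Qed.

Lemma is_derive_c_ccoord_from_loc (z0 : C2) (j : nat) (p1 p2 : R -> C) (x : R) (l1 l2 : C) :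
  is_derive_c p1 x l1 -> is_derive_c p2 x l2 ->
  is_derive_c (fun s => ccoord j (from_loc z0 U (p1 s, p2 s))) x
    (ccoord j (from_loc C2zero U (l1, l2))).
Proof.
  intros H1 H2; destruct j; simpl; (eapply is_derive_c_eq;
    [apply is_derive_c_plus; [apply is_derive_c_const|];
     apply is_derive_c_plus; apply is_derive_c_mult; eauto using is_derive_c_const
    | cbv beta; ring]).
Qed.

(* The partial derivatives d psi / d t_m, expressed in the local coordinates w'. *)
Definition chart_tangent (m : nat) (t1 t2 t3 : R) : C2 :=
  match m with
  | 0%nat => (RtoC 1, Ci * pt 0 PhiC t1 t2 t3)%C
  | 1%nat => (Ci, Ci * pt 1 PhiC t1 t2 t3)%C
  | _ => (RtoC 0, 1 + Ci * pt 2 PhiC t1 t2 t3)%C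
  end.

Lemma pt_ccoord_psi (j m : nat) (t1 t2 t3 : R) : (m < 3)%nat -> ex_pt m PhiC t1 t2 t3 ->
  pt m (fun x y z => ccoord j (psi zeta U Phi x y z)) t1 t2 t3 =
    ccoord j (from_loc C2zero U (chart_tangent m t1 t2 t3)) /\
  pt m (fun x y z => Cconj (ccoord j (psi zeta U Phi x y z))) t1 t2 t3 =
    Cconj (ccoord j (from_loc C2zero U (chart_tangent m t1 t2 t3))).
Proof.
  intros Hm Hex.
  assert (Hid : forall x, is_derive_c (fun s => RtoC s) x 1%C)
    by (intros; apply is_derive_c_RtoC, (is_derive_id (K := R_AbsRing))).
  destruct m as [|[|[|m]]]; [| | | lia]; simpl in Hex; apply CD_correct in Hex; cbn [pt];
    (split; apply is_derive_c_unique; [|apply is_derive_c_conj]);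
    (eapply is_derive_c_eq;
      [apply is_derive_c_ccoord_from_loc;
         repeat match goal with
         | |- is_derive_c (fun _ => Cplus _ _) _ _ => apply is_derive_c_plus
         | |- is_derive_c (fun _ => Cmult _ _) _ _ => apply is_derive_c_mult
         | |- is_derive_c (fun s => RtoC s) _ _ => apply Hid
         | |- is_derive_c RtoC _ _ => apply Hid
         | |- is_derive_c (fun _ => ?c) _ _ => apply is_derive_c_const
         | |- _ => exact Hex
         end
      | destruct j; simpl; ring]).
Qed.

Hypothesis HU : unitary2 U.

Lemma dist2_from_loc_coords (x1 y1 x2 y2 : R) :
  dist2 (from_loc zeta U (x1 + Ci * y1, x2 + Ci * y2)%C) zeta =
  sqrt (x1 ^ 2 + y1 ^ 2 + x2 ^ 2 + y2 ^ 2).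
Proof.
  rewrite dist2_from_loc by exact HU; simpl fst; simpl snd.
  rewrite !Cmod2, !Re_plus_i, !Im_plus_i; f_equal; ring.
Qed.

Lemma dist2_psi (t1 t2 t3 : R) :
  dist2 (psi zeta U Phi t1 t2 t3) zeta = sqrt (t1 ^ 2 + t2 ^ 2 + t3 ^ 2 + Phi t1 t2 t3 ^ 2).
Proof. apply dist2_from_loc_coords. Qed.

Lemma Rabs_le_dist2_psi (t1 t2 t3 : R) : Rabs t3 <= dist2 (psi zeta U Phi t1 t2 t3) zeta.
Proof.
  rewrite dist2_psi, <- sqrt_Rsqr_abs; apply sqrt_le_1_alt; unfold Rsqr; nra.
Qed.

Hypothesis Hgraph : forall w, dist2 w zeta < delta ->
  (rho w = 0 <-> Im (snd (to_loc zeta U w)) =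
     Phi (Re (fst (to_loc zeta U w))) (Im (fst (to_loc zeta U w))) (Re (snd (to_loc zeta U w)))).

Lemma rho_from_loc_coords (x1 y1 x2 y2 : R) :
  dist2 (from_loc zeta U (x1 + Ci * y1, x2 + Ci * y2)%C) zeta < delta ->
  (rho (from_loc zeta U (x1 + Ci * y1, x2 + Ci * y2)%C) = 0 <-> y2 = Phi x1 y1 x2).
Proof.
  intros Hd; rewrite (Hgraph _ Hd), to_loc_from_loc by exact HU; simpl fst; simpl snd.
  rewrite !Re_plus_i, !Im_plus_i; reflexivity.
Qed.

Lemma rho_psi (t1 t2 t3 : R) :
  chart_dom zeta U Phi delta t1 t2 t3 -> rho (psi zeta U Phi t1 t2 t3) = 0.
Proof. intros Hd; apply (rho_from_loc_coords _ _ _ _ Hd); reflexivity. Qed.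

Section Slice.

Variables t1 t2 : R.
Local Notation O := (chart_dom zeta U Phi delta t1 t2).

(* A limit of points of the graph of Phi at distance < r < delta from zeta lies on bD,
   hence on the graph of Phi again. *)
Lemma chart_dom_limit (r s : R) (sn : nat -> R) : r < delta ->
  (forall n, Rabs (sn n - s) < / (INR n + 1)) ->
  (forall n, O (sn n) /\ dist2 (psi zeta U Phi t1 t2 (sn n)) zeta < r) -> O s.
Proof.
  intros Hr Hs Hsn.
  set (vn := fun n => Phi t1 t2 (sn n)).
  set (K1 := fun p : R * R => rho (from_loc zeta U (t1 + Ci * t2, fst p + Ci * snd p)%C)).
  set (K3 := fun p : R * R => t1 ^ 2 + t2 ^ 2 + fst p ^ 2 + snd p ^ 2).
  assert (HK3 : forall n, K3 (sn n, vn n) < r ^ 2 /\ 0 < r).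
  { intro n; destruct (Hsn n) as [_ H]; rewrite dist2_psi in H; fold (vn n) in H;
    unfold K3; cbn [fst snd].
    pose proof (sqrt_pos (t1 ^ 2 + t2 ^ 2 + sn n ^ 2 + vn n ^ 2));
      pose proof (sqrt_sqrt (t1 ^ 2 + t2 ^ 2 + sn n ^ 2 + vn n ^ 2) ltac:(nra)).
    split; nra. }
  assert (Hr0 : 0 < r) by apply (HK3 0%nat).
  destruct (bounded_sequence_cluster sn vn s r Hs) as [l Hl].
  { intro n; destruct (HK3 n) as [H _]; unfold K3 in H; simpl in H; split; nra. }
  assert (CK1 : continuous K1 (s, l))
    by (unfold K1; rewrite rho_polynomial; simpl; continuous_R).
  assert (EK1 : forall n, K1 (sn n, vn n) = 0) by (intro n; apply rho_psi, Hsn).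
  assert (L1 : K1 (s, l) <= 0) by (apply Hl; [exact CK1 | intro n; rewrite EK1; lra]).
  assert (L2 : - K1 (s, l) <= 0)
    by (apply (Hl (fun p => - K1 p)); [apply continuous_Ropp, CK1 | intro n; rewrite EK1; lra]).
  assert (L3 : K3 (s, l) <= r ^ 2)
    by (apply Hl; [unfold K3; continuous_R | intro n; left; apply HK3]).
  assert (Hdist : sqrt (K3 (s, l)) < delta).
  { apply (Rle_lt_trans _ r); [|exact Hr].
    rewrite <- (sqrt_pow2 r) by lra; apply sqrt_le_1_alt, L3. }
  unfold K1, K3 in *; cbn [fst snd] in *.
  assert (Hl_graph : l = Phi t1 t2 s)
    by (apply rho_from_loc_coords; [rewrite dist2_from_loc_coords; exact Hdist | lra]).
  unfold chart_dom; rewrite dist2_psi, <- Hl_graph; exact Hdist.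
Qed.

Lemma chart_dom_complement_locally_far (r s : R) : r < delta -> ~ O s ->
  locally s (fun y => O y -> r <= dist2 (psi zeta U Phi t1 t2 y) zeta).
Proof.
  intros Hr Hs; apply NNPP; intro Hn.
  assert (Hseq : forall n : nat, exists y, Rabs (y - s) < / (INR n + 1) /\
                   O y /\ dist2 (psi zeta U Phi t1 t2 y) zeta < r).
  { intro n; apply NNPP; intro Hn2; apply Hn.
    assert (Hpos : 0 < / (INR n + 1)) by (apply Rinv_0_lt_compat; pose proof (pos_INR n); lra).
    exists (mkposreal _ Hpos); intros y Hy HO; apply Rnot_lt_le; intro Hlt.
    apply Hn2; exists y; repeat split; assumption. }
  destruct (choice _ Hseq) as [sn Hsn].
  apply Hs, (chart_dom_limit r s sn Hr); apply Hsn.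
Qed.

Hypothesis HPhi : C2_on (chart_dom zeta U Phi delta) PhiC.

Lemma open_chart_slice : open O.
Proof.
  intros s Hs.
  assert (HPs : continuous (fun s => Phi t1 t2 s) s)
    by exact (proj1 (Ck_on_continuous _ 2 _ (C2_on_slice _ t1 t2 _ HPhi) s Hs)).
  assert (Hf : continuous (fun s => sqrt (t1 ^ 2 + t2 ^ 2 + s ^ 2 + Phi t1 t2 s ^ 2)) s)
    by (apply continuous_sqrt_comp; continuous_R).
  unfold chart_dom in Hs; rewrite dist2_psi in Hs.
  apply (filter_imp (fun y => sqrt (t1 ^ 2 + t2 ^ 2 + y ^ 2 + Phi t1 t2 y ^ 2) < delta));
    [intros y Hy; unfold chart_dom; rewrite dist2_psi; exact Hy | exact (Hf _ (open_lt _ _ Hs))].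
Qed.

Lemma Ck_on_ccoord_psi (j : nat) : Ck_on 2 O (fun s => ccoord j (psi zeta U Phi t1 t2 s)).
Proof.
  pose proof (C2_on_slice _ t1 t2 _ HPhi); apply Ck_on_ccoord_from_loc; Ck_on_auto.
Qed.

Lemma Ck_on_rho_d_psi (j : nat) :
  (j < 2)%nat -> Ck_on 2 O (fun s => rho_d j (psi zeta U Phi t1 t2 s)).
Proof.
  intros Hj; pose proof (Ck_on_ccoord_psi 0) as H0; pose proof (Ck_on_ccoord_psi 1) as H1.
  destruct j as [|[|j]]; [| | lia].
  - apply (Ck_on_ext _ open_chart_slice _ (fun s =>
      let w := ccoord 0 (psi zeta U Phi t1 t2 s) in
      RtoC (Re w) + Ci * (RtoC (-2) * (RtoC (Im w) * (RtoC (Im w) * RtoC (Im w)))))%C);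
      [intros; rewrite rho_d_0; apply C_ext; simpl; ring | cbv zeta; Ck_on_auto].
  - rewrite rho_d_1; exact (Ck_on_conj _ _ _ H1).
Qed.

Lemma Ck_on_rho_ddbar_psi (k l : nat) : (k < 2)%nat -> (l < 2)%nat ->
  Ck_on 1 O (fun s => rho_ddbar k l (psi zeta U Phi t1 t2 s)).
Proof.
  intros Hk Hl; pose proof (Ck_on_ccoord_psi 0) as H0.
  destruct k as [|[|k]]; [| | lia]; destruct l as [|[|l]]; try lia;
    [ apply (Ck_on_ext _ open_chart_slice _ (fun s =>
        let w := ccoord 0 (psi zeta U Phi t1 t2 s) in
        RtoC (/ 2) * (1 + RtoC 6 * (RtoC (Im w) * RtoC (Im w))))%C);
        [intros; rewrite rho_ddbar_00; apply C_ext; simpl; field | cbv zeta; Ck_on_auto]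
    | rewrite rho_ddbar_01 | rewrite rho_ddbar_10 | rewrite rho_ddbar_11 ]; apply Ck_on_const.
Qed.

Lemma Ck_on_pt_ccoord_psi (j m : nat) : (m < 3)%nat ->
  Ck_on 1 O (fun s => pt m (fun x y z => ccoord j (psi zeta U Phi x y z)) t1 t2 s) /\
  Ck_on 1 O (fun s => pt m (fun x y z => Cconj (ccoord j (psi zeta U Phi x y z))) t1 t2 s).
Proof.
  intros Hm.
  assert (HT : Ck_on 1 O (fun s => ccoord j (from_loc C2zero U (chart_tangent m t1 t2 s)))).
  { pose proof (C2_on_slice_pt _ t1 t2 _ m HPhi Hm).
    destruct m as [|[|[|m]]]; [| | | lia]; cbn [chart_tangent];
      apply Ck_on_ccoord_from_loc; Ck_on_auto. }
  assert (Ex : forall s, O s -> ex_pt m PhiC t1 t2 s)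
    by (intros s Hs; exact (proj1 (proj1 HPhi t1 t2 s Hs m Hm))).
  pose proof (fun s Hs => pt_ccoord_psi j m t1 t2 s Hm (Ex s Hs)) as E.
  split; [apply (Ck_on_ext _ open_chart_slice _ _ _ (fun s Hs => eq_sym (proj1 (E s Hs))))
         |apply (Ck_on_ext _ open_chart_slice _ _ _ (fun s Hs => eq_sym (proj2 (E s Hs))))].
  - exact HT.
  - exact (Ck_on_conj _ _ _ HT).
Qed.

Lemma Ck_on_LambdaL : Ck_on 1 O (LambdaL zeta U Phi t1 t2).
Proof.
  cbv beta zeta delta [LambdaL pullback_coef sum2 det3]; Ck_on_auto;
    match goal with
    | |- Ck_on _ _ (pt _ (fun _ _ _ => Cconj _) _ _) =>
        refine (proj2 (Ck_on_pt_ccoord_psi _ _ _)); lia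
    | |- Ck_on _ _ (pt _ _ _ _) => refine (proj1 (Ck_on_pt_ccoord_psi _ _ _)); lia
    | |- Ck_on _ _ (fun _ => rho_ddbar _ _ _) => apply Ck_on_rho_ddbar_psi; lia
    | |- Ck_on _ _ (fun _ => rho_d _ _) => apply Ck_on_S, Ck_on_rho_d_psi; lia
    end.
Qed.

Lemma Ck_on_LDelta_psi (z : C2) : Ck_on 2 O (fun s => LDelta (psi zeta U Phi t1 t2 s) z).
Proof.
  cbv beta delta [LDelta sum2]; Ck_on_auto;
    match goal with
    | |- Ck_on _ _ (fun _ => ccoord _ _) => apply Ck_on_ccoord_psi
    | |- Ck_on _ _ (fun _ => rho_d _ _) => apply Ck_on_rho_d_psi; lia
    end.
Qed.

End Slice.

End Chart.

Theorem corollary2p3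
  (zeta : C2) (U : mat2) (Phi : R -> R -> R -> R) (delta : R)
  (f : C2 -> C) (z : C2)
  (* zeta in bD *)
  (Hzeta : rho zeta = 0)
  (* local coordinates: w' = U (w - zeta), U unitary, rho' := rho o (w' |-> zeta + U^* w')
     has d rho'/d v2 (0) = |grad rho(zeta)| and its other first partials vanish at 0 *)
  (HU : unitary2 U)
  (Hnormal : pdR 3 (fun w' => rho (from_loc zeta U w')) C2zero = grad_norm rho zeta /\
             forall k, (k < 3)%nat -> pdR k (fun w' => rho (from_loc zeta U w')) C2zero = 0)
  (Hdelta : 0 < delta)
  (* near zeta (on the delta-ball), bD is the graph v2 = Phi(u1,v1,u2) *)
  (Hgraph : forall w, dist2 w zeta < delta ->
     (rho w = 0 <-> Im (snd (to_loc zeta U w)) =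
        Phi (Re (fst (to_loc zeta U w))) (Im (fst (to_loc zeta U w)))
            (Re (snd (to_loc zeta U w)))))
  (HPhi : C2_on (chart_dom zeta U Phi delta) (fun t1 t2 t3 => RtoC (Phi t1 t2 t3)))
  (* d LDelta / d u2 (w, z) <> 0 for w in bD, |w - zeta| < delta, |z - zeta| < delta *)
  (HdD : forall t1 t2 t3 z', chart_dom zeta U Phi delta t1 t2 t3 ->
     dist2 z' zeta < delta -> dDelta_u2 zeta U Phi z' t1 t2 t3 <> RtoC 0)
  (* f is C^1 on bD and supported in {w in bD : |w - zeta| < delta} *)
  (Hf1 : C1_on (chart_dom zeta U Phi delta) (fun t1 t2 t3 => f (psi zeta U Phi t1 t2 t3)))
  (Hfsupp : exists r, r < delta /\
     forall w, rho w = 0 -> r <= dist2 w zeta -> f w = RtoC 0)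
  (* z in D, |z - zeta| < delta *)
  (Hz : rho z < 0) (Hzd : dist2 z zeta < delta) :
  cauchy_leray_chart zeta U Phi delta f z =
  int3 (restr zeta U Phi delta (fun t1 t2 t3 =>
    Cmult (Cinv (LDelta (psi zeta U Phi t1 t2 t3) z))
          (pt 2 (restr zeta U Phi delta (fun s1 s2 s3 =>
                   Cmult (f (psi zeta U Phi s1 s2 s3)) (gammaL zeta U Phi z s1 s2 s3)))
              t1 t2 t3))).
Proof.
  (* [Hzeta], [Hnormal] and [Hdelta] only describe how the chart arises. *)
  destruct U as [[a b] [c d]], Hfsupp as [r [Hr Hfr]].
  pose proof (rho_psi zeta a b c d Phi delta HU Hgraph) as Hon.
  set (U := ((a, b), (c, d))) in *.
  unfold cauchy_leray_chart, int3.
  apply (f_equal (fun h => RInt_line h)); apply functional_extensionality; intro t1.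
  apply (f_equal (fun h => RInt_line h)); apply functional_extensionality; intro t2.
  apply (RInt_line_ext0_by_parts (chart_dom zeta U Phi delta t1 t2)
           (fun s => Rlt_dec (dist2 (psi zeta U Phi t1 t2 s) zeta) delta)
           (fun s => f (psi zeta U Phi t1 t2 s)) (LambdaL zeta U Phi t1 t2)
           (fun s => LDelta (psi zeta U Phi t1 t2 s) z) r).
  - apply open_chart_slice; assumption.
  - exact (C1_on_slice _ t1 t2 _ Hf1).
  - apply Ck_on_LambdaL; assumption.
  - apply Ck_on_LDelta_psi; assumption.
  - intros s Hs E.
    pose proof (LDelta_Re_ge_rho_diff (psi zeta U Phi t1 t2 s) z) as HRe.
    rewrite E, (Hon t1 t2 s Hs) in HRe; simpl in HRe; lra.
  - intros s Hs; exact (HdD t1 t2 s z Hs Hzd).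
  - intros s Hs Hrs; apply Hfr; [exact (Hon t1 t2 s Hs)|].
    apply Rlt_le, (Rlt_le_trans _ _ _ Hrs), Rabs_le_dist2_psi, HU.
  - intros s Hs.
    apply (filter_imp _ _ (fun y Hfar Hy => Hfr _ (Hon t1 t2 y Hy) (Hfar Hy))).
    exact (chart_dom_complement_locally_far zeta a b c d Phi delta HU Hgraph t1 t2 r s Hr Hs).
Qed.
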